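(* Let $e$ be an edge of a graph $G$. Then $\operatorname{reg}(G/e)\le\operatorname{reg}(G)\le\operatorname{reg}(G/e)+1$. Consequently $\operatorname{reg}(H)\le\operatorname{reg}(G)$ whenever $H$ is obtained from $G$ by a sequence of edge contractions.
   Context: For an edge $e=xy$, $G/e$ is the simple graph obtained from $G-\{x,y\}$ by adding a new vertex $w$ adjacent to every vertex of $(N_G(x)\cup N_G(y))\setminus\{x,y\}$. $\operatorname{reg}(G)=\max\{j\ge0:\widetilde H_{j-1}(\operatorname{Ind}(G[S]);\Bbbk)\neq0\text{ for some }S\subseteq V(G)\}$ over a field $\Bbbk$, $\operatorname{Ind}$ the independence complex. *)

From HB Require Import structures.
From mathcomp Require Import all_boot all_order all_algebra.
From Stdlib Require Import ClassicalEpsilon.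
Set Implicit Arguments. Unset Strict Implicit. Unset Printing Implicit Defensive.
Import GRing.Theory.
Local Open Scope ring_scope.

Record sgraph := SGraph {
  vtx : finType;
  adj : rel vtx;
  adj_sym : symmetric adj;
  adj_irr : irreflexive adj }.

Section Contract.
Variables (G : sgraph) (x y : vtx G).

Definition cvtx_rest := {v : vtx G | (v != x) && (v != y)}.
(* None is the new vertex w; Some v are the vertices of G - {x,y}. *)
Definition cvtx : finType := option cvtx_rest.

Definition cadj (a b : cvtx) : bool :=
  match a, b with
  | None, None => false
  | None, Some v => adj x (val v) || adj y (val v)
  | Some u, None => adj x (val u) || adj y (val u)
  | Some u, Some v => adj (val u) (val v)
  end.

Lemma cadj_sym : symmetric cadj.
Proof. by case=> [u|] [v|] //=; rewrite adj_sym. Qed.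

Lemma cadj_irr : irreflexive cadj.
Proof. by case=> [u|] //=; rewrite adj_irr. Qed.

Definition contract : sgraph := SGraph cadj_sym cadj_irr.
End Contract.

Inductive contracts_to : sgraph -> sgraph -> Prop :=
  | ct_refl G : contracts_to G G
  | ct_step (G H : sgraph) (x y : vtx G) :
      adj x y -> contracts_to (contract x y) H -> contracts_to G H.

Section Homology.
Variables (F : fieldType) (V : finType).

Definition bsign (v : V) (sigma : {set V}) : F :=
  (-1) ^+ #|[set u in sigma | (enum_rank u < enum_rank v)%N]|.

(* chains are functions {set V} -> F (a set of size d = an (d-1)-simplex) *)
Definition bd (c : {set V} -> F) : {set V} -> F :=
  fun tau => \sum_(v | v \notin tau) bsign v (v |: tau) * c (v |: tau).

Definition chain_on (K : {set {set V}}) (d : nat) (c : {set V} -> F) : Prop :=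
  forall sigma, c sigma != 0 -> sigma \in K /\ #|sigma| = d.

(* \tilde H_{d-1}(K; F) <> 0 : some (d-1)-cycle is not a boundary.
   The augmented complex includes the empty face (size 0, degree -1). *)
Definition rhom_nz (K : {set {set V}}) (d : nat) : Prop :=
  exists z, [/\ chain_on K d z, (forall tau, bd z tau = 0) &
    ~ exists b, chain_on K d.+1 b /\ (forall tau, bd b tau = z tau)].
End Homology.

Definition independent (G : sgraph) (s : {set vtx G}) : bool :=
  [forall u in s, forall v in s, ~~ adj u v].

(* Ind(G[S]) as a complex on the vertex set of G *)
Definition ind_cx (G : sgraph) (S : {set vtx G}) : {set {set vtx G}} :=
  [set s : {set vtx G} | (s \subset S) && independent s].

Definition pbool (P : Prop) : bool :=
  if excluded_middle_informative P then true else false.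

(* reg(G) = max { j >= 0 : \tilde H_{j-1}(Ind(G[S]); F) <> 0 for some S }.
   Only j <= #|V| can occur (faces have at most #|V| vertices), so the
   inner max over j < #|V|.+1 is exhaustive; j = 0 occurs for S = set0. *)
Definition reg (F : fieldType) (G : sgraph) : nat :=
  \max_(S : {set vtx G})
    \max_(j < #|vtx G|.+1 | pbool (rhom_nz F (ind_cx S) j)) j.

From HB Require Import structures.
From mathcomp Require Import all_boot all_order all_algebra.
From mathcomp Require Import ring.
From Stdlib Require Import Classical ClassicalEpsilon.
Set Implicit Arguments. Unset Strict Implicit. Unset Printing Implicit Defensive.
Import GRing.Theory.
Local Open Scope ring_scope.

(* Two facts about independence complexes carry the argument.  First, the
   deletion/link sequence of a vertex v: a nonzero class of degree d in
   Ind(G[S]) survives in Ind(G[S - v]) or produces a nonzero class of degree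
   d - 1 in the link Ind(G[S - N[v]]); concretely, if the link of a cycle z
   at v bounds a, then z + bd (cone v a) is a homologous cycle avoiding v.
   Second, if x and y are adjacent and have no neighbour in U, then
   Ind(G[U + x + y]) is the suspension of Ind(G[U]), and the cycle
   cone x c - cone y c lifts the degree of a nonzero class c by one.
   Subsets of G avoiding x and y induce the same graph in G and in G/e.
   For G, splitting off x (and then y) reduces everything to such subsets at
   the cost of one degree, so reg G <= reg (G/e) + 1; for G/e, splitting off
   the new vertex w leaves either such a subset or the link S - N[w], whose
   suspension by the edge xy lives in G, so reg (G/e) <= reg G. *)

Lemma enum_rank_index (T : finType) (x : T) : enum_rank x = index x (enum T) :> nat.
Proof.
rewrite /enum_rank enum_rank_in.unlock insubdK //.
by rewrite unfold_in /= cardE index_mem mem_enum.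
Qed.

Lemma enum_option (T : finType) : enum {: option T} = None :: map Some (enum T).
Proof. by rewrite !enumT {1}Finite.enum.unlock. Qed.

Lemma val_enum_sig (T : finType) (P : pred T) :
  map val (enum {: {x | P x}}) = filter P (enum T).
Proof.
rewrite [in LHS]enumT [in LHS]unlock -[LHS]/(map val (pmap insub (Finite.enum T))).
by rewrite (pmap_filter (@insubK _ P _)) enumT; apply: eq_filter => x; rewrite isSome_insub.
Qed.

Lemma index_filter_ltn (T : eqType) (P : pred T) (s : seq T) (a b : T) :
  a \in s -> b \in s -> P a -> P b ->
  (index a (filter P s) < index b (filter P s))%N = (index a s < index b s)%N.
Proof.
elim: s => //= h s IH; rewrite !inE => ha hb Pa Pb.
case: (eqVneq h a) => [ea|na]; case: (eqVneq h b) => [eb|nb] /=.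
- by subst; rewrite Pb /= eqxx.
- by subst; rewrite Pa /= eqxx (negbTE nb).
- by subst; rewrite Pb /= eqxx (negbTE na).
- move: ha hb; rewrite eq_sym (negbTE na) eq_sym (negbTE nb) /= => ha hb.
  by case: (P h) => /=; rewrite ?(negbTE na) ?(negbTE nb) ?ltnS; exact: IH.
Qed.

Section Boundary.
Variables (F : fieldType) (V : finType).
Implicit Types (c z a b : {set V} -> F) (s t r : {set V}) (u v w : V).
Implicit Types (K X Lk : {set {set V}}) (d : nat).
Local Notation bs := (bsign F).
Local Notation rk u := (nat_of_ord (enum_rank u)).

Definition cycle c := forall t, bd c t = 0.

Definition boundary_in (K : {set {set V}}) d c :=
  exists b, chain_on K d b /\ forall t, bd b t = c t.

Lemma rhom_nzPn K d :
  ~ rhom_nz F K d <-> forall z, chain_on K d z -> cycle z -> boundary_in K d.+1 z.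
Proof.
split=> [nK z zK zc|hK [z [zK zc []]]]; last exact: hK.
by apply: NNPP => nb; apply: nK; exists z.
Qed.

Lemma bsign_sqr u s : bs u s * bs u s = 1.
Proof. by rewrite /bsign -exprD addnn -mul2n mulnC exprM sqrr_sign. Qed.

Lemma bsign_neq0 u s : bs u s != 0.
Proof. by rewrite /bsign signr_eq0. Qed.

Lemma bsignUid u s : bs u (u |: s) = bs u s.
Proof.
rewrite /bsign; congr (_ ^+ _); apply: eq_card => w; rewrite !inE.
by case: eqP => [->|]; rewrite ?ltnn ?andbF.
Qed.

Lemma bsignU1 u v s : v \notin s -> bs u (v |: s) = (-1) ^+ (rk v < rk u)%N * bs u s.
Proof.
move=> vs; rewrite /bsign -exprD; congr (_ ^+ _).
case h: (rk v < rk u)%N; last first.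
  by apply: eq_card => w; rewrite !inE; case: eqP => [->|] //=; rewrite h andbF.
have -> : [set w in v |: s | (enum_rank w < enum_rank u)%N] =
          v |: [set w in s | (enum_rank w < enum_rank u)%N].
  by apply/setP => w; rewrite !inE; case: eqP => [->|] //=; rewrite h.
by rewrite cardsU1 inE (negbTE vs).
Qed.

Lemma sign_ltn_swap u v : u != v ->
  (-1) ^+ (rk v < rk u)%N = - (-1) ^+ (rk u < rk v)%N :> F.
Proof.
move=> uv; have : rk u != rk v by apply: contra uv => /eqP /ord_inj /enum_rank_inj ->.
by case: ltngtP => //= _ _; rewrite ?expr1 ?expr0 ?opprK.
Qed.

Lemma bd_ext c1 c2 s : (forall t, c1 t = c2 t) -> bd c1 s = bd c2 s.
Proof. by move=> h; apply: eq_bigr => v _; rewrite h. Qed.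

Lemma bdD c1 c2 s : bd (fun t => c1 t + c2 t) s = bd c1 s + bd c2 s.
Proof. by rewrite /bd -big_split; apply: eq_bigr => v _; rewrite mulrDr. Qed.

Lemma bdN c s : bd (fun t => - c t) s = - bd c s.
Proof. by rewrite /bd -sumrN; apply: eq_bigr => v _; rewrite mulrN. Qed.

Lemma bdB c1 c2 s : bd (fun t => c1 t - c2 t) s = bd c1 s - bd c2 s.
Proof. by rewrite bdD bdN. Qed.

Lemma bd0 s : bd (fun _ => 0 : F) s = 0.
Proof. by rewrite /bd big1 // => v _; rewrite mulr0. Qed.

Lemma sumr_antisym (g : V -> V -> F) :
  (forall i j, g i j = - g j i) -> (forall i, g i i = 0) ->
  \sum_i \sum_j g i j = 0.
Proof.
move=> anti diag; pose lt (i j : V) := (rk i < rk j)%N.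
have split_ij i j : g i j = (if lt i j then g i j else 0) + (if lt j i then g i j else 0).
  by rewrite /lt; case: ltngtP => [_|_|/ord_inj/enum_rank_inj ->]; rewrite ?addr0 ?add0r.
under eq_bigr => i _ do rewrite (eq_bigr _ (fun j _ => split_ij i j)) big_split /=.
rewrite big_split /= [X in _ + X]exchange_big /= -[X in _ + X]opprK; apply/eqP.
rewrite subr_eq0 -sumrN; apply/eqP; apply: eq_bigr => i _.
by rewrite -sumrN; apply: eq_bigr => j _; case: ifP => _; rewrite ?oppr0 // anti opprK.
Qed.

Lemma bd_bd c : cycle (bd c).
Proof.
move=> s; rewrite /bd.
pose g u w := if [&& u \notin s, w \notin s & w != u] then
    bs u s * bs w (u |: s) * c (w |: (u |: s)) else 0.
transitivity (\sum_u \sum_w g u w); last first.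
  apply: sumr_antisym => [u w|u]; last by rewrite /g eqxx !andbF.
  rewrite /g; case: (boolP (u \in s)) => us; case: (boolP (w \in s)) => ws /=;
    rewrite ?oppr0 //.
  case: (eqVneq w u) => [->|wu]; first by rewrite oppr0.
  by rewrite /= setUCA !bsignU1 // (sign_ltn_swap wu); ring.
rewrite big_mkcond; apply: eq_bigr => u _; case: ifP => us; last first.
  by rewrite big1 // => w _; rewrite /g us.
rewrite big_distrr big_mkcond /=; apply: eq_bigr => w _.
rewrite /g us /= !inE negb_or; case: (eqVneq w u) => [->|wu] /=; rewrite ?andbF //.
by rewrite andbT; case: ifP => // _; rewrite !bsignUid mulrA.
Qed.

Definition link_chain v z : {set V} -> F :=
  fun s => if v \in s then 0 else bs v s * z (v |: s).

Definition cone_chain v a : {set V} -> F :=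
  fun s => if v \in s then bs v s * a (s :\ v) else 0.

Lemma bd_setU1 v z r : v \notin r -> bd z (v |: r) = - bs v r * bd (link_chain v z) r.
Proof.
move=> vr; rewrite /bd big_distrr /= big_mkcond [RHS]big_mkcond /=.
apply: eq_bigr => u _; rewrite !inE negb_or.
case: (boolP (u \in r)) => ur; rewrite ?andbF ?mulr0 //=.
case: (eqVneq u v) => [->|uv] /=; first by rewrite /link_chain setU11 !mulr0.
rewrite /link_chain !inE eq_sym (negbTE uv) (negbTE vr) /= bsignUid bsignU1 //.
rewrite bsignUid setUCA bsignU1 // (sign_ltn_swap uv) setUCA.
by rewrite -[LHS]mulr1 -(bsign_sqr v r); ring.
Qed.

Lemma bd_link_in v z s : v \in s -> bd (link_chain v z) s = 0.
Proof.
by move=> vs; rewrite /bd big1 // => u _; rewrite /link_chain !inE vs orbT mulr0.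
Qed.

Lemma link_cycle v z : cycle z -> cycle (link_chain v z).
Proof.
move=> zc t; case: (boolP (v \in t)) => vt; first exact: bd_link_in.
have /eqP := zc (v |: t); rewrite bd_setU1 // mulf_eq0 oppr_eq0.
by rewrite (negbTE (bsign_neq0 _ _)) => /eqP.
Qed.

Lemma link_cone v a s :
  (forall t, v \in t -> a t = 0) -> link_chain v (cone_chain v a) s = a s.
Proof.
move=> ha; rewrite /link_chain /cone_chain; case: ifP => vs; first by rewrite ha.
by rewrite setU11 setU1K ?vs // bsignUid mulrA bsign_sqr mul1r.
Qed.

Lemma bd_cone_notin v a s : v \notin s -> bd (cone_chain v a) s = a s.
Proof.
move=> vs; rewrite /bd (bigD1 v) //= big1 ?addr0.
  by rewrite /cone_chain setU11 setU1K // bsignUid mulrA bsign_sqr mul1r.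
move=> u /andP [us uv]; rewrite /cone_chain !inE eq_sym (negbTE uv) (negbTE vs).
by rewrite mulr0.
Qed.

Lemma bd_cone_setU1 v a r : v \notin r -> (forall t, v \in t -> a t = 0) ->
  bd (cone_chain v a) (v |: r) = - bs v r * bd a r.
Proof.
move=> vr ha; rewrite bd_setU1 //; congr (_ * _).
by apply: bd_ext => t; rewrite link_cone.
Qed.

Lemma bd_cone v a s : (forall t, v \in t -> a t = 0) -> cycle a ->
  bd (cone_chain v a) s = a s.
Proof.
move=> ha ac; case: (boolP (v \in s)) => vs; last exact: bd_cone_notin.
by rewrite -(setD1K vs) bd_cone_setU1 ?setD1K ?ac ?mulr0 ?ha // !inE eqxx.
Qed.

Definition down_closed (K : {set {set V}}) := forall s t, t \subset s -> s \in K -> t \in K.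

Lemma chain_on_bd K d c : down_closed K -> chain_on K d.+1 c -> chain_on K d (bd c).
Proof.
move=> dK hc s; rewrite /bd => hs.
have [u /andP [us hu]] : exists u, (u \notin s) && (c (u |: s) != 0).
  apply/existsP; apply: contraR hs; rewrite negb_exists => /forallP h.
  apply/eqP; apply: big1 => u us; have := h u; rewrite us /= negbK => /eqP ->.
  by rewrite mulr0.
have [h1 h2] := hc _ hu; split; first by apply: dK h1; apply: subsetUr.
by move: h2; rewrite cardsU1 us add1n => -[].
Qed.

Lemma chain_onD K d c1 c2 : chain_on K d c1 -> chain_on K d c2 ->
  chain_on K d (fun s => c1 s + c2 s).
Proof.
move=> h1 h2 s hs; case: (eqVneq (c1 s) 0) => [e|]; last exact: h1.
by apply: h2; move: hs; rewrite e add0r.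
Qed.

Lemma chain_onN K d c : chain_on K d c -> chain_on K d (fun s => - c s).
Proof. by move=> h s; rewrite oppr_eq0; apply: h. Qed.

Lemma chain_onB K d c1 c2 : chain_on K d c1 -> chain_on K d c2 ->
  chain_on K d (fun s => c1 s - c2 s).
Proof. by move=> h1 h2; apply: chain_onD => //; apply: chain_onN. Qed.

Lemma chain_on_sub K (K' : {set {set V}}) d c :
  {subset K <= K'} -> chain_on K d c -> chain_on K' d c.
Proof. by move=> sK h s /h [] /sK. Qed.

Lemma chain_on_vanish K d c v : (forall s, s \in K -> v \notin s) ->
  chain_on K d c -> forall t, v \in t -> c t = 0.
Proof. by move=> hK hc t vt; apply/eqP; apply: contraT => /hc [/hK]; rewrite vt. Qed.

Lemma chain_on_link X Lk d v z :
  (forall s, v \notin s -> v |: s \in X -> s \in Lk) ->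
  chain_on X d.+1 z -> chain_on Lk d (link_chain v z).
Proof.
move=> hL hz s; rewrite /link_chain; case: ifP => [_|vs]; first by rewrite eqxx.
rewrite mulf_eq0 negb_or => /andP [_ /hz [h1 h2]]; split; first by apply: hL; rewrite ?vs.
by move: h2; rewrite cardsU1 vs add1n => -[].
Qed.

Lemma chain_on_cone X Lk d v a :
  (forall s, s \in Lk -> v |: s \in X) ->
  chain_on Lk d a -> chain_on X d.+1 (cone_chain v a).
Proof.
move=> hL ha s; rewrite /cone_chain; case: ifP => [vs|_]; last by rewrite eqxx.
rewrite mulf_eq0 negb_or => /andP [_ /ha [/hL h1 h2]]; rewrite setD1K // in h1.
by split => //; rewrite -(setD1K vs) cardsU1 !inE eqxx /= h2.
Qed.

Section DeletionLink.
Variables (X Del Lk : {set {set V}}) (v : V).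
Hypotheses (dX : down_closed X) (sDX : {subset Del <= X}).
Hypothesis memDel : forall s, v \notin s -> s \in X -> s \in Del.
Hypothesis memLk : forall s, s \in Lk -> (v \notin s) /\ (v |: s \in X).
Hypothesis memLkU1 : forall s, v \notin s -> v |: s \in X -> s \in Lk.

Lemma chain_on_del_addr_bd_cone d z a :
  chain_on X d.+1 z -> chain_on Lk d.+1 a ->
  (forall t, bd a t = link_chain v z t) ->
  chain_on Del d.+1 (fun s => z s + bd (cone_chain v a) s).
Proof.
move=> zX aLk abd.
have av := chain_on_vanish (fun s sLk => proj1 (memLk sLk)) aLk.
have coneX : chain_on X d.+2 (cone_chain v a).
  by apply: chain_on_cone aLk => s /memLk [].
move=> s hs; case: (boolP (v \in s)) => vs.
  move: hs; rewrite -(setD1K vs) bd_cone_setU1 ?setD11 // abd /link_chain setD11.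
  by rewrite mulNr mulrA bsign_sqr mul1r addrN eqxx.
suff [h1 h2] : s \in X /\ #|s| = d.+1 by split => //; apply: memDel.
case: (eqVneq (z s) 0) => [e|nz]; last exact: zX.
by move: hs; rewrite e add0r; exact: (chain_on_bd dX coneX).
Qed.

Lemma rhom_nz_del_link d :
  rhom_nz F X d.+1 -> rhom_nz F Del d.+1 \/ rhom_nz F Lk d.
Proof.
move=> hX; apply: NNPP => /not_or_and [/rhom_nzPn nDel /rhom_nzPn nLk].
move: hX; apply/rhom_nzPn => z zX zc.
have [a [aLk abd]] := nLk _ (chain_on_link memLkU1 zX) (link_cycle v zc).
pose z' s := z s + bd (cone_chain v a) s.
have z'c : cycle z' by move=> t; rewrite bdD zc bd_bd addr0.
have [b [bDel bbd]] := nDel z' (chain_on_del_addr_bd_cone zX aLk abd) z'c.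
exists (fun s => b s - cone_chain v a s); split.
  apply: chain_onB; first exact: chain_on_sub sDX bDel.
  by apply: chain_on_cone aLk => s /memLk [].
by move=> t; rewrite bdB bbd /z' addrK.
Qed.

End DeletionLink.

Lemma rhom_nz_suspension (Y Z : {set {set V}}) x y k : x != y ->
  (forall s, s \in Y -> (x \notin s) && (y \notin s)) ->
  (forall s, s \in Y -> (x |: s \in Z) && (y |: s \in Z)) ->
  (forall s, x \notin s -> x |: s \in Z -> s \in Y) ->
  rhom_nz F Y k -> rhom_nz F Z k.+1.
Proof.
move=> xy hY hZ hLk [c [cY cc nbc]].
have cx := chain_on_vanish (fun s sY => proj1 (andP (hY s sY))) cY.
have cy := chain_on_vanish (fun s sY => proj2 (andP (hY s sY))) cY.
exists (fun s => cone_chain x c s - cone_chain y c s); split.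
- by apply: chain_onB; apply: chain_on_cone cY => s /hZ /andP [].
- by move=> t; rewrite bdB !bd_cone // subrr.
(* the link at x of a filling of the suspended cycle fills c *)
move=> [b [bZ bbd]]; apply: nbc; exists (fun s => - link_chain x b s); split.
  exact/chain_onN/(chain_on_link hLk).
move=> t; rewrite bdN; case: (boolP (x \in t)) => xt.
  by rewrite bd_link_in // cx // oppr0.
have := bbd (x |: t); rewrite bd_setU1 // /cone_chain setU11 setU1K // bsignUid.
have -> : (if y \in x |: t then bs y (x |: t) * c ((x |: t) :\ y) else 0) = 0.
  by case: ifP => // _; rewrite cx ?mulr0 // !inE xy eqxx.
move=> /(congr1 (fun q => bs x t * q)).
by rewrite subr0 mulrA bsign_sqr mul1r mulrA mulrN bsign_sqr mulN1r.
Qed.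

End Boundary.

Section Transport.
Variables (F : fieldType) (R V : finType) (f : R -> V).
Hypothesis f_inj : injective f.
(* The signs in bd depend on the enumeration order, so f must preserve it. *)
Hypothesis f_mono : forall u w,
  (enum_rank (f u) < enum_rank (f w))%N = (enum_rank u < enum_rank w)%N.
Local Notation bs := (bsign F).
Implicit Types (s : {set R}) (t : {set V}).

Definition frange := f @: [set: R].

Definition pull (c : {set V} -> F) : {set R} -> F := fun s => c (f @: s).

Definition push (c : {set R} -> F) : {set V} -> F :=
  fun t => if t \subset frange then c (f @^-1: t) else 0.

Definition in_image (c : {set V} -> F) := forall t, c t != 0 -> t \subset frange.

Lemma bsign_imset u s : bs (f u) (f @: s) = bs u s.
Proof.
rewrite /bsign; congr (_ ^+ _).
have -> : [set w in f @: s | (enum_rank w < enum_rank (f u))%N] =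
          f @: [set w in s | (enum_rank w < enum_rank u)%N].
  apply/setP => w; rewrite inE; apply/andP/imsetP.
    by move=> [/imsetP [w0 w0s ->]]; rewrite f_mono => h; exists w0; rewrite ?inE ?w0s.
  by move=> [w0]; rewrite inE => /andP [w0s h] ->; rewrite imset_f // f_mono.
by rewrite card_imset.
Qed.

Lemma preimset_imset s : f @^-1: (f @: s) = s.
Proof. by apply/setP => u; rewrite inE mem_imset. Qed.

Lemma imset_preimset t : t \subset frange -> f @: (f @^-1: t) = t.
Proof.
move=> /subsetP h; apply/setP => v; apply/imsetP/idP => [[u]|vt].
  by rewrite inE => ? ->.
by have /imsetP [u _ e] := h _ vt; exists u; rewrite // inE -e.
Qed.

Lemma sum_image (g : V -> F) : (forall v, v \notin frange -> g v = 0) ->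
  \sum_v g v = \sum_u g (f u).
Proof.
move=> h; rewrite (bigID (mem frange)) /= [X in _ + X]big1 ?addr0; last by move=> v /h.
rewrite big_imset /=; last by move=> ? ? _ _; apply: f_inj.
by apply: eq_bigl => u; rewrite inE.
Qed.

Lemma bd_pull c s : in_image c -> bd (pull c) s = pull (bd c) s.
Proof.
move=> hc; rewrite /pull /bd [RHS]big_mkcond [LHS]big_mkcond /= sum_image; last first.
  move=> v vf; case: ifP => // _; have -> : c (v |: f @: s) = 0; last by rewrite mulr0.
  apply/eqP; apply: contraT => /hc /subsetP h; case/negP: vf; apply: h.
  by rewrite !inE eqxx.
by apply: eq_bigr => u _; rewrite mem_imset // -imsetU1 bsign_imset; case: ifP.
Qed.

Lemma push_in_image c : in_image (push c).
Proof. by move=> t; rewrite /push; case: ifP => // _; rewrite eqxx. Qed.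

Lemma pull_push c s : pull (push c) s = c s.
Proof. by rewrite /pull /push imsetS ?subsetT // preimset_imset. Qed.

Lemma push_pull c t : in_image c -> push (pull c) t = c t.
Proof.
move=> hc; rewrite /push /pull; case: ifP => h; first by rewrite imset_preimset.
by apply/esym/eqP; apply: contraT => /hc; rewrite h.
Qed.

Lemma bd_push c t : bd (push c) t = push (bd c) t.
Proof.
case h: (t \subset frange).
  rewrite -(imset_preimset h) -[LHS]/(pull (bd (push c)) _).
  rewrite -bd_pull; last exact: push_in_image.
  rewrite /push imsetS ?subsetT // preimset_imset.
  by apply: bd_ext => r; apply: pull_push.
rewrite /push h /bd big1 // => u _; case: ifP; last by rewrite mulr0.
by move=> /(subset_trans (subsetUr _ _)); rewrite h.
Qed.

Section Complexes.
Variables (K : {set {set R}}) (K' : {set {set V}}).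
Hypothesis memK' : forall s, (f @: s \in K') = (s \in K).
Hypothesis K'_image : forall t, t \in K' -> t \subset frange.

Lemma chain_on_push d c : chain_on K d c -> chain_on K' d (push c).
Proof.
move=> hc t; rewrite /push; case: ifP => [h|_]; last by rewrite eqxx.
by move=> /hc [hK hd]; rewrite -(imset_preimset h) memK' card_imset.
Qed.

Lemma chain_on_pull d c : chain_on K' d c -> chain_on K d (pull c).
Proof. by move=> hc s /hc [hK hd]; rewrite -memK' -hd card_imset. Qed.

Lemma chain_on_in_image d c : chain_on K' d c -> in_image c.
Proof. by move=> hc t /hc [/K'_image]. Qed.

Lemma rhom_nz_transport d : rhom_nz F K d <-> rhom_nz F K' d.
Proof.
split=> [[z [zK zc nbz]] | [z [zK' zc nbz]]].
- exists (push z); split; first exact: chain_on_push.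
    by move=> t; rewrite bd_push /push; case: ifP; rewrite ?zc.
  move=> [b [bK' bbd]]; apply: nbz; exists (pull b); split; first exact: chain_on_pull.
  move=> s; rewrite bd_pull; last exact: chain_on_in_image bK'.
  by rewrite /pull bbd -/(pull (push z) s) pull_push.
- have zim := chain_on_in_image zK'.
  exists (pull z); split; first exact: chain_on_pull.
    by move=> s; rewrite bd_pull // /pull zc.
  move=> [b [bK bbd]]; apply: nbz; exists (push b); split; first exact: chain_on_push.
  by move=> t; rewrite bd_push -[RHS](push_pull t zim) /push; case: ifP; rewrite ?bbd.
Qed.

End Complexes.
End Transport.

Section IndependenceComplex.
Variables (F : fieldType) (G : sgraph).
Implicit Types (S T U s t : {set vtx G}) (u v w x y : vtx G).

Lemma independentP s :
  reflect (forall u w, u \in s -> w \in s -> ~~ adj u w) (independent s).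
Proof.
apply: (iffP forallP) => [h u w us ws | h u].
  by have := h u; rewrite us /= => /forallP /(_ w); rewrite ws.
by apply/implyP => us; apply/forallP => w; apply/implyP => ws; apply: h.
Qed.

Lemma independentS s t : t \subset s -> independent s -> independent t.
Proof.
move=> /subsetP ts /independentP hs; apply/independentP => u w ut wt.
by apply: hs; apply: ts.
Qed.

Lemma independentU1 v s :
  independent (v |: s) = [forall u in s, ~~ adj v u] && independent s.
Proof.
apply/independentP/andP => [h|[/forallP hv /independentP hs] u w].
  split; last by apply/independentP => u w us ws; apply: h; rewrite !inE ?us ?ws orbT.
  by apply/forallP => u; apply/implyP => us; apply: h; rewrite !inE ?eqxx ?us ?orbT.
have hv' z : z \in s -> ~~ adj v z by move=> zs; have := hv z; rewrite zs.
rewrite !inE => /orP [/eqP ->|us] /orP [/eqP ->|ws]; rewrite ?adj_irr ?hv' //.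
  by rewrite adj_sym hv'.
exact: hs.
Qed.

Lemma ind_cxE S s : (s \in ind_cx S) = (s \subset S) && independent s.
Proof. by rewrite inE. Qed.

Lemma ind_cx_down_closed S : down_closed (ind_cx S).
Proof.
move=> s t ts; rewrite !ind_cxE => /andP [sS hs].
by rewrite (subset_trans ts sS) (independentS ts hs).
Qed.

(* S :\: (v |: [set u | adj v u]) is S minus the closed neighbourhood N[v]. *)
Lemma rhom_nz_ind_del_link S v d : v \in S ->
  rhom_nz F (ind_cx S) d.+1 ->
  rhom_nz F (ind_cx (S :\ v)) d.+1 \/
  rhom_nz F (ind_cx (S :\: (v |: [set u | adj v u]))) d.
Proof.
move=> vS; apply: (rhom_nz_del_link (v := v)).
- exact: ind_cx_down_closed.
- by move=> s; rewrite !ind_cxE => /andP [h ->]; rewrite (subset_trans h (subsetDl _ _)).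
- move=> s vs; rewrite !ind_cxE => /andP [/subsetP h ->]; rewrite andbT.
  by apply/subsetP => u us; rewrite !inE h // andbT; apply: contraNneq vs => <-.
- move=> s; rewrite !ind_cxE independentU1 => /andP [/subsetP h ->].
  split; first by apply/negP => /h; rewrite !inE eqxx.
  rewrite andbT; apply/andP; split.
    apply/subsetP => u; rewrite !inE => /orP [/eqP -> //|/h].
    by rewrite !inE => /andP [].
  apply/forallP => u; apply/implyP => /h.
  by rewrite !inE negb_or => /andP [/andP []].
- move=> s vs; rewrite !ind_cxE independentU1 => /and3P [/subsetP h /forall_inP hv ->].
  rewrite andbT; apply/subsetP => u us; rewrite !inE negb_or hv // andbT.
  by rewrite h ?inE ?us ?orbT // andbT; apply: contraNneq vs => <-.
Qed.

Lemma rhom_nz_ind_suspension x y U k : adj x y ->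
  x \notin U -> y \notin U ->
  (forall u, u \in U -> ~~ adj x u && ~~ adj y u) ->
  rhom_nz F (ind_cx U) k -> rhom_nz F (ind_cx (x |: (y |: U))) k.+1.
Proof.
move=> axy xU yU hU; have xy : x != y by apply: contraTneq axy => ->; rewrite adj_irr.
apply: (rhom_nz_suspension (x := x) (y := y)) => //.
- move=> s; rewrite ind_cxE => /andP [/subsetP h _].
  by apply/andP; split; apply/negP => /h; apply/negP.
- move=> s; rewrite !ind_cxE => /andP [/subsetP h hi].
  rewrite !independentU1 hi !andbT -andbA.
  apply/and4P; split; try by apply/forall_inP => u /h /hU /andP [].
  + by apply/subsetP => u; rewrite !inE => /orP [->|/h ->]; rewrite ?orbT.
  + by apply/subsetP => u; rewrite !inE => /orP [->|/h ->]; rewrite ?orbT.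
- move=> s xs; rewrite !ind_cxE independentU1 => /and3P [/subsetP h /forall_inP hx ->].
  rewrite andbT; apply/subsetP => u us; have := h u; rewrite !inE us orbT => /(_ isT).
  case/or3P => [/eqP eu | /eqP eu | //]; first by rewrite -eu us in xs.
  by move: (hx u us); rewrite eu axy.
Qed.

End IndependenceComplex.

Section Regularity.
Variable F : fieldType.

Lemma rhom_nz_leq_card (V : finType) (K : {set {set V}}) j : rhom_nz F K j -> (j <= #|V|)%N.
Proof.
move=> [z [zK _ nbz]]; rewrite leqNgt; apply/negP => hj; apply: nbz.
exists (fun _ => 0); split; first by move=> s; rewrite eqxx.
move=> t; rewrite bd0; apply/esym/eqP; apply: contraT => /zK [_ hc].
by move: (max_card (mem t)); rewrite hc leqNgt hj.
Qed.

Lemma rhom_nz_leq_reg (G : sgraph) (S : {set vtx G}) j :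
  rhom_nz F (ind_cx S) j -> (j <= reg F G)%N.
Proof.
move=> h; have hj : (j < #|vtx G|.+1)%N by rewrite ltnS (rhom_nz_leq_card h).
apply: leq_trans (leq_bigmax S).
apply: (@leq_bigmax_cond _ (fun j : 'I_#|vtx G|.+1 => pbool (rhom_nz F (ind_cx S) j))
  (fun j => nat_of_ord j) (Ordinal hj)).
by rewrite /pbool; case: excluded_middle_informative.
Qed.

Lemma reg_leq (G : sgraph) m :
  (forall (S : {set vtx G}) j, rhom_nz F (ind_cx S) j -> (j <= m)%N) -> (reg F G <= m)%N.
Proof.
move=> h; apply/bigmax_leqP => S _; apply/bigmax_leqP => j.
by rewrite /pbool; case: excluded_middle_informative => // hj _; apply: h hj.
Qed.

End Regularity.

Lemma independent_imset (R : finType) (G : sgraph) (f : R -> vtx G) (s : {set R}) :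
  independent (f @: s) = [forall a in s, forall b in s, ~~ adj (f a) (f b)].
Proof.
apply/independentP/forall_inP => [h a as_|h u w /imsetP [a ha ->] /imsetP [b hb ->]].
  by apply/forall_inP => b bs; apply: h; apply: imset_f.
by have /forall_inP := h a ha; apply.
Qed.

Lemma imsetS_inj (T1 T2 : finType) (f : T1 -> T2) (A B : {set T1}) :
  injective f -> (f @: A \subset f @: B) = (A \subset B).
Proof.
move=> f_inj; apply/idP/idP; last exact: imsetS.
by move=> /subsetP h; apply/subsetP => a ha; rewrite -(mem_imset _ _ f_inj) h // imset_f.
Qed.

Section Contraction.
Variables (F : fieldType) (G : sgraph) (x y : vtx G).
Local Notation R := (cvtx_rest x y).
Local Notation H := (contract x y).
Local Notation inH := (fun r : R => Some r : vtx H).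

Lemma enum_rank_val_ltn (u w : R) :
  (enum_rank (val u) < enum_rank (val w))%N = (enum_rank u < enum_rank w)%N.
Proof.
rewrite !enum_rank_index -[index u _](index_map val_inj) -[index w _](index_map val_inj).
rewrite val_enum_sig; symmetry.
by apply: index_filter_ltn; rewrite ?mem_enum ?(valP u) ?(valP w).
Qed.

Lemma enum_rank_Some_ltn (u w : R) :
  (enum_rank (inH u) < enum_rank (inH w))%N = (enum_rank u < enum_rank w)%N.
Proof.
rewrite !enum_rank_index [enum (vtx H)]enum_option /=.
by rewrite !index_map //; move=> ? ? [].
Qed.

(* Both Ind(G[val @: Q]) and Ind(H[inH @: Q]) are copies of the same
   complex on R, since G and G/e induce the same graph on G - {x, y}. *)
Lemma rhom_nz_ind_val_Some (Q : {set R}) d :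
  rhom_nz F (ind_cx (val @: Q)) d <-> rhom_nz F (ind_cx (G := H) (inH @: Q)) d.
Proof.
pose K := [set s : {set R} | val @: s \in ind_cx (val @: Q)].
have inH_inj : injective inH by move=> ? ? [].
have toG : rhom_nz F K d <-> rhom_nz F (ind_cx (val @: Q)) d.
  apply: (@rhom_nz_transport F R (vtx G) val val_inj enum_rank_val_ltn K) => [s|t].
    by rewrite /K [RHS]inE.
  by rewrite ind_cxE => /andP [h _]; apply: subset_trans h (imsetS _ (subsetT _)).
have toH : rhom_nz F K d <-> rhom_nz F (ind_cx (G := H) (inH @: Q)) d.
  apply: (@rhom_nz_transport F R (vtx H) _ inH_inj enum_rank_Some_ltn K) => [s|t].
    rewrite /K [RHS]inE !ind_cxE !imsetS_inj //; last exact: val_inj.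
    by rewrite (independent_imset (G := H)) independent_imset.
  by rewrite ind_cxE => /andP [h _]; apply: subset_trans h (imsetS _ (subsetT _)).
by rewrite -toG toH.
Qed.

Lemma imset_val_preimset (T : {set vtx G}) :
  x \notin T -> y \notin T -> val @: (val @^-1: T : {set R}) = T.
Proof.
move=> xT yT; apply/setP => v; apply/imsetP/idP => [[r]|vT]; first by rewrite inE => ? ->.
have vxy : (v != x) && (v != y) by apply/andP; split; apply: contraTneq vT => ->.
by exists (exist _ v vxy); rewrite ?inE.
Qed.

Lemma imset_Some_preimset (S : {set vtx H}) : None \notin S -> inH @: (inH @^-1: S) = S.
Proof.
move=> nS; apply/setP => o; apply/imsetP/idP => [[r]|oS]; first by rewrite inE => ? ->.
by case: o oS nS => [r|] oS; [exists r; rewrite ?inE | rewrite oS].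
Qed.

Lemma rhom_nz_ind_leq_reg_contract (T : {set vtx G}) k : x \notin T -> y \notin T ->
  rhom_nz F (ind_cx T) k -> (k <= reg F H)%N.
Proof.
move=> xT yT; rewrite -(imset_val_preimset xT yT) rhom_nz_ind_val_Some.
exact: rhom_nz_leq_reg.
Qed.

Lemma rhom_nz_contract_ind (S : {set vtx H}) k : None \notin S ->
  rhom_nz F (ind_cx S) k -> rhom_nz F (ind_cx (val @: (inH @^-1: S))) k.
Proof. by move=> nS; rewrite -{1}(imset_Some_preimset nS) rhom_nz_ind_val_Some. Qed.

Lemma rhom_nz_contract_ind_leq_reg (S : {set vtx H}) k : None \notin S ->
  rhom_nz F (ind_cx S) k -> (k <= reg F G)%N.
Proof. by move=> nS /(rhom_nz_contract_ind nS); apply: rhom_nz_leq_reg. Qed.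

Hypothesis axy : adj x y.

Lemma reg_leq_reg_contract_succ : (reg F G <= (reg F H).+1)%N.
Proof.
have avoid_x (S : {set vtx G}) d :
    x \notin S -> rhom_nz F (ind_cx S) d -> (d <= (reg F H).+1)%N.
  case: d => [|d] // xS hS; case: (boolP (y \in S)) => yS; last first.
    exact/leqW/(rhom_nz_ind_leq_reg_contract xS yS hS).
  case: (rhom_nz_ind_del_link yS hS) => [hdel|hlink].
    apply/leqW/(rhom_nz_ind_leq_reg_contract _ _ hdel).
      by rewrite !inE (negbTE xS) andbF.
    by rewrite !inE eqxx.
  apply: (rhom_nz_ind_leq_reg_contract _ _ hlink); rewrite !inE ?eqxx //.
  by rewrite adj_sym axy orbT.
apply: reg_leq => S [|d] // hS; case: (boolP (x \in S)) => xS; last exact: avoid_x hS.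
case: (rhom_nz_ind_del_link xS hS) => [hdel|hlink].
  by apply: avoid_x hdel; rewrite setD11.
by apply: (rhom_nz_ind_leq_reg_contract _ _ hlink); rewrite !inE ?eqxx ?axy ?orbT.
Qed.

Lemma reg_contract_leq_reg : (reg F H <= reg F G)%N.
Proof.
apply: reg_leq => S [|d] // hS.
case: (boolP (None \in S)) => nS; last exact: rhom_nz_contract_ind_leq_reg nS hS.
case: (rhom_nz_ind_del_link nS hS) => [hdel|hlink].
  by apply: rhom_nz_contract_ind_leq_reg hdel; rewrite setD11.
set L := S :\: _ in hlink; have nL : None \notin L by rewrite !inE eqxx.
apply: rhom_nz_leq_reg (rhom_nz_ind_suspension axy _ _ _ (rhom_nz_contract_ind nL hlink)).
- by apply/imsetP => -[r _ e]; have := valP r; rewrite -e eqxx.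
- by apply/imsetP => -[r _ e]; have := valP r; rewrite -e eqxx andbF.
move=> u /imsetP [r]; rewrite inE => hr ->.
by move: hr; rewrite /L !inE /= negb_or => /andP [->].
Qed.

End Contraction.

Local Close Scope ring_scope.

Theorem mainTheorem17 (F : fieldType) :
  (forall (G : sgraph) (x y : vtx G), adj x y ->
     reg F (contract x y) <= reg F G <= (reg F (contract x y)).+1) /\
  (forall G H : sgraph, contracts_to G H -> reg F H <= reg F G).
Proof.
split=> [G x y axy | G H].
  by rewrite (reg_contract_leq_reg F axy) (reg_leq_reg_contract_succ F axy).
elim=> // G0 H0 x y axy _ IH.
exact: leq_trans IH (reg_contract_leq_reg F axy).
Qed.
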